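(* Let $K:[0,\infty)\to(0,\infty)$ be non-increasing with $K(0)=1$, and for $\sigma>0$ let $K_\sigma(x)=K(x/\sigma)$. Let $\mathcal{X}=\{\mathbf{x}_1,\dots,\mathbf{x}_n\}\subset\mathbb{R}^d$ and let $\mathcal{C}_1,\dots,\mathcal{C}_k$ be a partition of $\mathcal{X}$ into nonempty sets. For each $l\in[k]$, suppose $\mathcal{C}_l$ is connected at distance $\delta_l$. Let $\mathbf{U}\in\mathbb{R}^{n\times n}$ have as columns the eigenvectors of the unnormalised Laplacian $\mathbf{L}$ of the graph $\mathcal{G}=(\mathcal{X},K_\sigma)$. Then for each $i,j\in[n]$, $l\in[k]$ with $\mathbf{x}_i,\mathbf{x}_j\in\mathcal{C}_l$, $$\|\mathbf{U}_{i,1:k}-\mathbf{U}_{j,1:k}\|\le \max_{m\in[k]} n^{1.5}k^{0.5}\sqrt{\frac{K_\sigma(d(\mathcal{C}_m,\mathcal{X}\setminus\mathcal{C}_m))}{K_\sigma(\delta_l)}}.$$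
   Context: $[n]=\{1,\dots,n\}$; $\|\cdot\|$ is the Euclidean norm and $d(\mathbf{x},\mathbf{y})=\|\mathbf{x}-\mathbf{y}\|$. For sets $S,U\subset\mathbb{R}^d$, $d(S,U)=\inf_{\mathbf{x}\in S,\mathbf{y}\in U}d(\mathbf{x},\mathbf{y})$, with the convention $d(S,\emptyset)=\infty$. A set $S\subset\mathbb{R}^d$ is connected at distance $\delta$ if there is no partition of $S$ into $S_1,S_2$ with $d(S_1,S_2)>\delta$. The graph $\mathcal{G}=(\mathcal{X},K_\sigma)$ has affinity matrix $\mathbf{A}_{ij}=K_\sigma(\|\mathbf{x}_i-\mathbf{x}_j\|)$ (including $i=j$), degree matrix $\mathbf{D}$ diagonal with $\mathbf{D}_{ii}=\sum_j\mathbf{A}_{ij}$, and unnormalised Laplacian $\mathbf{L}=\mathbf{D}-\mathbf{A}$. ''The eigenvectors'' means an orthonormal eigenbasis arranged as columns so that the corresponding eigenvalues are in nondecreasing order. $\mathbf{U}_{i,1:k}$ denotes the first $k$ entries of row $i$. *)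

From HB Require Import structures.
From mathcomp Require Import all_boot all_order all_algebra.
From mathcomp Require Import boolp classical_sets reals constructive_ereal.
Set Implicit Arguments. Unset Strict Implicit. Unset Printing Implicit Defensive.
Import Order.TTheory GRing.Theory Num.Theory.
Local Open Scope ring_scope.

Section Defs.
Variable R : realType.

Definition enorm (d : nat) (v : 'rV[R]_d) : R := Num.sqrt (\sum_(t < d) v 0 t ^+ 2).

(* d(S,U) for finite index sets of points x_i; +oo when S or U is empty *)
Definition setdist (n d : nat) (x : 'I_n -> 'rV[R]_d) (S U : {set 'I_n}) : \bar R :=
  \big[Order.min/+oo%E]_(i in S) \big[Order.min/+oo%E]_(j in U) (enorm (x i - x j))%:E.

Definition connected_at (n d : nat) (x : 'I_n -> 'rV[R]_d) (S : {set 'I_n}) (delta : R) : Prop :=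
  forall S1 S2 : {set 'I_n}, S1 :|: S2 = S -> S1 :&: S2 = finset.set0 ->
    S1 != finset.set0 -> S2 != finset.set0 -> ~ (delta%:E < setdist x S1 S2)%E.

Definition Ksig (K : R -> R) (sigma : R) (t : \bar R) : R :=
  match t with
  | r%:E => K (r / sigma)
  | +oo%E => inf [set K s | s in [set s : R | 0 <= s]]
  | -oo%E => 1
  end.

Definition affinity (K : R -> R) (sigma : R) (n d : nat) (x : 'I_n -> 'rV[R]_d) : 'M[R]_n :=
  \matrix_(i, j) K (enorm (x i - x j) / sigma).
Definition degree_mx (n : nat) (A : 'M[R]_n) : 'M[R]_n :=
  diag_mx (\row_i \sum_j A i j).
Definition laplacian (K : R -> R) (sigma : R) (n d : nat) (x : 'I_n -> 'rV[R]_d) : 'M[R]_n :=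
  degree_mx (affinity K sigma x) - affinity K sigma x.

Definition sorted_eigenbasis (n : nat) (L U : 'M[R]_n) : Prop :=
  U^T *m U = 1%:M /\
  exists lam : 'rV[R]_n, L *m U = U *m diag_mx lam /\
    (forall a b : 'I_n, (a <= b)%N -> lam 0 a <= lam 0 b).

Definition rowdist_first (n k : nat) (U : 'M[R]_n) (i j : 'I_n) : R :=
  Num.sqrt (\sum_(t < n | (t < k)%N) (U i t - U j t) ^+ 2).

End Defs.

From HB Require Import structures.
From mathcomp Require Import all_boot all_order all_algebra.
From mathcomp Require Import boolp classical_sets reals constructive_ereal.
From mathcomp Require Import ring lra zify.
Import Order.TTheory GRing.Theory Num.Theory.
Local Open Scope ring_scope.

(* Write M for the largest cut affinity max_m K_sigma(d(C_m, X \ C_m)).  A vector y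
   constant on the clusters has Laplacian energy sum_ab A_ab (y_b - y_a)^2 <= 4 n M |y|^2,
   since only cross-cluster pairs contribute; the k-dimensional space of such vectors
   contains one orthogonal to the first k-1 eigenvectors, so lambda_k <= 2 n M.  For an
   eigenvector u among the first k, two points of the same cluster C_l are joined by a
   path of at most n-1 hops of length <= delta_l, each carrying affinity >= K_sigma(delta_l);
   Cauchy-Schwarz along the path gives K_sigma(delta_l) (u_i - u_j)^2 <= (n-1) 2 lambda_k,
   and summing over the k columns with 4 (n-1) <= n^2 gives the bound. *)

Section SquareSums.
Variable R : realDomainType.

Lemma sqr_sum_le_size {I : Type} (s : seq I) (f : I -> R) :
  (\sum_(i <- s) f i) ^+ 2 <= (size s)%:R * \sum_(i <- s) f i ^+ 2.
Proof.
set m := (size s)%:R; set sf := \sum_(i <- s) f i; set sf2 := \sum_(i <- s) f i ^+ 2.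
have spread : \sum_(i <- s) \sum_(j <- s) (f i - f j) ^+ 2 = 2 * (m * sf2 - sf ^+ 2).
  have row_sum i : \sum_(j <- s) (f i - f j) ^+ 2 = m * f i ^+ 2 - 2 * f i * sf + sf2.
    under eq_bigr do rewrite sqrrB.
    rewrite !big_split /= sumrN big_const_seq count_predT iter_addr_0 sumrMnl.
    by rewrite -mulr_sumr -/sf -/sf2 -mulr_natl; ring.
  under eq_bigr do rewrite row_sum.
  rewrite !big_split /= sumrN big_const_seq count_predT iter_addr_0.
  by rewrite -mulr_sumr -mulr_suml -mulr_sumr -/sf -/sf2 -mulr_natl; ring.
rewrite -subr_ge0 -(pmulr_rge0 _ (ltr0n _ 2)) -spread.
by apply: sumr_ge0 => i _; apply: sumr_ge0 => j _; apply: sqr_ge0.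
Qed.

Lemma sum_zip_sub {T : Type} (v : T -> R) (j : T) (p : seq T) :
  \sum_(q <- zip (j :: p) p) (v q.2 - v q.1) = v (last j p) - v j.
Proof.
elim: p j => [|b p IH] j /=; first by rewrite big_nil subrr.
by rewrite big_cons IH /=; ring.
Qed.

Lemma ler_sum_path {T : Type} (e : rel T) (F G : T * T -> R) (j : T) (p : seq T) :
  (forall a b, e a b -> F (a, b) <= G (a, b)) -> path e j p ->
  \sum_(q <- zip (j :: p) p) F q <= \sum_(q <- zip (j :: p) p) G q.
Proof.
move=> FG; elim: p j => [|b p IH] j /=; first by rewrite !big_nil.
by case/andP=> ejb pb; rewrite !big_cons /= lerD ?FG ?IH.
Qed.

Lemma sum_zip_uniq_le {T : finType} (F : T -> T -> R) (j : T) (p : seq T) :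
  (forall a b, 0 <= F a b) -> uniq (j :: p) ->
  \sum_(q <- zip (j :: p) p) F q.1 q.2 <= \sum_a \sum_b F a b.
Proof.
move=> F0 p_uniq.
have F_row0 a : 0 <= \sum_b F a b by apply: sumr_ge0.
have zip_le : \sum_(q <- zip (j :: p) p) F q.1 q.2 <= \sum_(a <- j :: p) \sum_b F a b.
  elim: p j {p_uniq} => [|b p IH] j /=; first by rewrite big_nil big_seq1.
  rewrite big_cons [leRHS]big_cons lerD //=.
  by rewrite (bigD1 b) //= lerDl sumr_ge0.
apply: le_trans zip_le _; rewrite big_uniq // [leRHS](bigID (mem (j :: p))) /=.
by rewrite lerDl sumr_ge0.
Qed.

Lemma path_sqr_le {T : Type} (v : T -> R) (j : T) (p : seq T) :
  (v (last j p) - v j) ^+ 2 <= (size p)%:R * \sum_(q <- zip (j :: p) p) (v q.2 - v q.1) ^+ 2.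
Proof.
rewrite -sum_zip_sub; have := sqr_sum_le_size (zip (j :: p) p) (fun q => v q.2 - v q.1).
by rewrite size_zip /= (minn_idPr (leqnSn _)).
Qed.

Lemma connect_sqr_le (T : finType) (e : rel T) (W : T -> T -> R) (w : R) (v : T -> R)
    (i j : T) :
  0 <= w -> (forall a b, 0 <= W a b) -> (forall a b, e a b -> w <= W a b) ->
  connect e j i ->
  w * (v i - v j) ^+ 2 <= #|T|.-1%:R * \sum_a \sum_b W a b * (v b - v a) ^+ 2.
Proof.
move=> w0 W0 eW /connectP[p0 path0 ->]; case: (shortenP path0) => p p_path p_uniq _.
have size_p : (size p <= #|T|.-1)%N.
  by have := max_card (mem (j :: p)); rewrite (card_uniqP p_uniq) /=; lia.
have sq0 a b : 0 <= W a b * (v b - v a) ^+ 2 by rewrite mulr_ge0 ?sqr_ge0.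
set E := \sum_(q <- zip (j :: p) p) (v q.2 - v q.1) ^+ 2.
apply: (le_trans (ler_wpM2l w0 (path_sqr_le v j p))).
rewrite mulrCA -/E; apply: ler_pM; rewrite ?ler0n ?ler_nat //.
  by rewrite mulr_ge0 ?sumr_ge0 // => q _; rewrite sqr_ge0.
rewrite /E mulr_sumr.
apply: le_trans (sum_zip_uniq_le (fun a b => W a b * (v b - v a) ^+ 2) _ _ sq0 p_uniq).
apply: ler_sum_path p_path => a b /eW ewW.
by rewrite ler_wpM2r ?sqr_ge0.
Qed.
End SquareSums.

Arguments connect_sqr_le {R T e} W {w} v {i j}.

Section Eigenbasis.
Variables (R : realFieldType) (n : nat) (L U : 'M[R]_n) (lam : 'rV[R]_n).
Hypotheses (U_orth : U^T *m U = 1%:M) (LU : L *m U = U *m diag_mx lam).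

Lemma eigenbasis_quadE (t : 'I_n) : (row t U^T *m L *m (row t U^T)^T) 0 0 = lam 0 t.
Proof.
have UtLU : U^T *m L *m U = diag_mx lam by rewrite -mulmxA LU mulmxA U_orth mul1mx.
have <- : (U^T *m L *m U) t t = lam 0 t by rewrite UtLU mxE eqxx mulr1n.
rewrite tr_row trmxK -row_mul !mxE; apply: eq_bigr => s _.
by rewrite [row _ _ _ _]mxE [col _ _ _ _]mxE.
Qed.

Lemma rayleigh_le (r : 'I_n) (y : 'rV[R]_n) :
  (forall a b : 'I_n, (a <= b)%N -> lam 0 a <= lam 0 b) ->
  (forall t : 'I_n, (t < r)%N -> (y *m U) 0 t = 0) ->
  lam 0 r * (y *m y^T) 0 0 <= (y *m L *m y^T) 0 0.
Proof.
move=> lam_sorted yU0; set z := y *m U.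
have yE : y = z *m U^T by rewrite /z -mulmxA mulmx1C // mulmx1.
have -> : (y *m y^T) 0 0 = \sum_t z 0 t ^+ 2.
  rewrite yE trmx_mul trmxK mulmxA -(mulmxA z) U_orth mulmx1 mxE.
  by apply: eq_bigr => t _; rewrite [z^T _ _]mxE expr2.
have -> : (y *m L *m y^T) 0 0 = \sum_t lam 0 t * z 0 t ^+ 2.
  rewrite yE trmx_mul trmxK !mulmxA -(mulmxA _ L) LU mulmxA -(mulmxA z) U_orth mulmx1.
  rewrite mul_mx_diag mxE; apply: eq_bigr => t _.
  by rewrite [z^T _ _]mxE mxE; ring.
rewrite mulr_sumr; apply: ler_sum => t _.
have [t_lt|r_le] := ltnP t r; first by rewrite /z yU0 // expr0n !mulr0.
by rewrite ler_wpM2r ?sqr_ge0 ?lam_sorted.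
Qed.

End Eigenbasis.

Arguments eigenbasis_quadE {R n L U lam} U_orth LU t.
Arguments rayleigh_le {R n L U lam} U_orth LU r y.

Section ClusterVector.
Variable F : fieldType.

Lemma rank_lt_left_kernel m p (G : 'M[F]_(m, p)) :
  (\rank G < m)%N -> exists2 v : 'rV_m, v != 0 & v *m G = 0.
Proof.
move=> rG; have /rowV0Pn[v /sub_kermxP vG v0] : kermx G != 0.
  by rewrite kermx_eq0 /row_free neq_ltn rG.
by exists v.
Qed.

Lemma cluster_vector_orthogonal {n k p} (c : 'I_n -> 'I_k) (U : 'M[F]_(n, p)) :
  (0 < k)%N -> (forall l, exists i, c i = l) ->
  exists y : 'rV[F]_n, [/\ y != 0, forall a b, c a = c b -> y 0 a = y 0 b
    & forall t : 'I_p, (t < k.-1)%N -> (y *m U) 0 t = 0].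
Proof.
(* y = v *m B ranges over the vectors constant on clusters, and asking y *m U to vanish
   on the first k-1 coordinates imposes only k-1 linear conditions on v. *)
move=> k_gt0 c_surj; set B : 'M[F]_(k, n) := \matrix_(l, a) (c a == l)%:R.
set P : 'M[F]_(p, k.-1) := pid_mx k.-1.
have [v v0 vG] : exists2 v : 'rV_k, v != 0 & v *m (B *m U *m P) = 0.
  apply: rank_lt_left_kernel; apply: leq_ltn_trans (mxrankM_maxr _ _) _.
  by rewrite (leq_ltn_trans (rank_leq_col _)) ?prednK.
have vB a : (v *m B) 0 a = v 0 (c a).
  rewrite mxE (bigD1 (c a)) //= mxE eqxx mulr1 big1 ?addr0 // => l /negPf.
  by rewrite mxE eq_sym => ->; rewrite mulr0.
exists (v *m B); split=> [|a b cab|t t_lt].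
- apply: contra_neq v0 => vB0; apply/rowP => l; have [a <-] := c_surj l.
  by rewrite -vB vB0 !mxE.
- by rewrite !vB cab.
have := congr1 (fun X : 'rV[F]_k.-1 => X 0 (Ordinal t_lt)) vG; rewrite !mulmxA mxE [RHS]mxE => <-.
rewrite (bigD1 t) //= big1 ?addr0 => [|s /negPf st]; rewrite [P _ _]mxE /=.
  by rewrite eqxx t_lt mulr1.
have st_nat : (s == t :> nat) = false := st.
by rewrite st_nat mulr0.
Qed.
End ClusterVector.

Arguments cluster_vector_orthogonal {F n k p} c U.

Section Laplacian.
Variables (R : realType) (n : nat) (A : 'M[R]_n).

Definition energy (v : 'I_n -> R) : R := \sum_a \sum_b A a b * (v b - v a) ^+ 2.

Lemma quad_formE (M : 'M[R]_n) (y : 'rV[R]_n) :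
  (y *m M *m y^T) 0 0 = \sum_a \sum_b y 0 a * M a b * y 0 b.
Proof.
rewrite mxE exchange_big; apply: eq_bigr => b _.
by rewrite mxE big_distrl; apply: eq_bigr => a _; rewrite mxE.
Qed.

Lemma laplacianE a b :
  (degree_mx A - A) a b = (\sum_c A a c) *+ (a == b) - A a b.
Proof. by rewrite !mxE. Qed.

Lemma laplacian_quadE (v : 'I_n -> R) :
  \sum_a \sum_b v a * (degree_mx A - A) a b * v b =
  \sum_a \sum_b A a b * (v a ^+ 2 - v a * v b).
Proof.
apply: eq_bigr => a _.
have diag : \sum_b v a * ((\sum_c A a c) *+ (a == b)) * v b = (\sum_c A a c) * v a ^+ 2.
  rewrite (bigD1 a) //= eqxx mulr1n [X in _ + X]big1 ?addr0 => [|b /negPf]; last first.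
    by rewrite eq_sym => ->; rewrite mulr0n mulr0 mul0r.
  by ring.
under eq_bigr do rewrite laplacianE mulrBr mulrBl.
rewrite sumrB diag mulr_suml -sumrB; apply: eq_bigr => b _; ring.
Qed.

Lemma energy_le (M : R) (v : 'I_n -> R) :
  0 <= M -> (forall a b, 0 <= A a b) -> (forall a b, v a != v b -> A a b <= M) ->
  energy v <= 4 * n%:R * M * \sum_a v a ^+ 2.
Proof.
move=> M0 A0 A_le; set sv := \sum_a v a ^+ 2.
have term a b : A a b * (v b - v a) ^+ 2 <= 2 * M * (v a ^+ 2 + v b ^+ 2).
  have -> : 2 * M * (v a ^+ 2 + v b ^+ 2) = M * (v b - v a) ^+ 2 + M * (v a + v b) ^+ 2.
    by ring.
  have [-> | /A_le AM] := eqVneq (v a) (v b).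
    by rewrite subrr expr0n mulr0 mulr0 add0r mulr_ge0 ?sqr_ge0.
  by rewrite -[leLHS]addr0 lerD ?(ler_wpM2r (sqr_ge0 _) AM) // mulr_ge0 // sqr_ge0.
have total : \sum_a \sum_b 2 * M * (v a ^+ 2 + v b ^+ 2) = 4 * n%:R * M * sv.
  have row_total a : \sum_b 2 * M * (v a ^+ 2 + v b ^+ 2) = 2 * M * (n%:R * v a ^+ 2 + sv).
    by rewrite -mulr_sumr big_split /= sumr_const card_ord [n%:R * _]mulr_natl.
  rewrite (eq_bigr _ (fun a _ => row_total a)) -mulr_sumr big_split /= -mulr_sumr.
  by rewrite sumr_const card_ord -/sv -[sv *+ n]mulr_natl; ring.
rewrite -total; apply: ler_sum => a _; apply: ler_sum => b _; exact: term.
Qed.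

Hypothesis A_sym : forall a b, A a b = A b a.

Lemma energy_sym (v : 'I_n -> R) :
  energy v = 2 * \sum_a \sum_b A a b * (v a ^+ 2 - v a * v b).
Proof.
have swap : \sum_a \sum_b A a b * (v b ^+ 2 - v a * v b) =
    \sum_a \sum_b A a b * (v a ^+ 2 - v a * v b).
  by rewrite exchange_big; apply: eq_bigr => a _; apply: eq_bigr => b _; rewrite A_sym; ring.
rewrite mulr_natl mulr2n -{2}swap -big_split /energy.
by apply: eq_bigr => a _; rewrite -big_split; apply: eq_bigr => b _ /=; ring.
Qed.

Lemma laplacian_energy (y : 'rV[R]_n) :
  2 * (y *m (degree_mx A - A) *m y^T) 0 0 = energy (y 0).
Proof. by rewrite quad_formE laplacian_quadE energy_sym. Qed.

End Laplacian.

Lemma surj_card_le {T T' : finType} {f : T -> T'} :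
  (forall y, exists x, f x = y) -> (#|T'| <= #|T|)%N.
Proof.
move=> f_surj; rewrite -(size_codom f); apply: leq_trans (card_size _).
apply: subset_leq_card; apply/fintype.subsetP => y _.
by have [x <-] := f_surj y; apply: codom_f.
Qed.

Lemma leq_four_pred_sqr n : (4 * n.-1 <= n ^ 2)%N.
Proof. by case: n => [|m] //=; nia. Qed.

Section RealBounds.
Variable R : realType.

Lemma enorm_ge0 d (v : 'rV[R]_d) : 0 <= enorm v.
Proof. exact: sqrtr_ge0. Qed.

Lemma enormN d (v : 'rV[R]_d) : enorm (- v) = enorm v.
Proof. by rewrite /enorm; congr Num.sqrt; apply: eq_bigr => t _; rewrite mxE sqrrN. Qed.

Lemma bigmax_map_le (I : finType) (f : R -> R) (F : I -> R) :
  f 0 <= 0 -> f (\big[Num.max/0]_i F i) <= \big[Num.max/0]_i f (F i).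
Proof.
move=> f0; apply: (big_ind (fun u => f u <= _)).
- exact: le_trans f0 (bigmax_ge_id _ _ _ _).
- by move=> u w fu fw; case: (leP u w).
- by move=> i _; apply: le_bigmax.
Qed.

Lemma rowdist_first_le n k (U : 'M[R]_n) (i j : 'I_n) (b : R) :
  (k <= n)%N -> 0 <= b -> (forall t : 'I_n, (t < k)%N -> (U i t - U j t) ^+ 2 <= b) ->
  rowdist_first k U i j <= Num.sqrt (k%:R * b).
Proof.
move=> k_le_n b0 col_le; rewrite /rowdist_first ler_sqrt ?mulr_ge0 //.
apply: le_trans (ler_sum _ col_le) _.
by rewrite (big_ord_narrow k_le_n) sumr_const card_ord mulr_natl.
Qed.

End RealBounds.

Arguments bigmax_map_le {R I} f {F}.
Arguments rowdist_first_le {R n k U i j b}.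

Section Affinity.
Variables (R : realType) (K : R -> R) (sigma : R).
Hypotheses (K_pos : forall t, 0 <= t -> 0 < K t)
  (K_noninc : forall s t, 0 <= s -> s <= t -> K t <= K s) (sigma_pos : 0 < sigma).
Variables (n d : nat) (x : 'I_n -> 'rV[R]_d).
Let A := affinity K sigma x.

Lemma affinity_sym a b : A a b = A b a.
Proof. by rewrite !mxE -enormN opprB. Qed.

Lemma affinity_ge0 a b : 0 <= A a b.
Proof. by rewrite mxE ltW ?K_pos ?divr_ge0 ?enorm_ge0 ?ltW. Qed.

Lemma affinity_ge {a b} {r : R} : 0 <= r -> enorm (x a - x b) <= r -> K (r / sigma) <= A a b.
Proof.
move=> r0 ab_le; rewrite mxE; apply: K_noninc; first by rewrite divr_ge0 ?enorm_ge0 ?ltW.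
by rewrite ler_pM2r ?invr_gt0.
Qed.

Lemma setdist_ge0 (S T : {set 'I_n}) : (0 <= setdist x S T)%E.
Proof.
apply: (big_ind (fun u => 0 <= u)%E) => [|u w u0 w0|a _]; rewrite ?le_min ?u0 ?w0 ?leey //.
apply: (big_ind (fun u => 0 <= u)%E) => [|u w u0 w0|b _]; rewrite ?le_min ?u0 ?w0 ?leey //.
by rewrite lee_fin enorm_ge0.
Qed.

Lemma affinity_le_setdist (S T : {set 'I_n}) a b :
  a \in S -> b \in T -> A a b <= Ksig K sigma (setdist x S T).
Proof.
move=> aS bT; have : (setdist x S T <= (enorm (x a - x b))%:E)%E.
  by apply: le_trans (bigmin_le_cond _ _ aS) _; exact: bigmin_le_cond.
move: (setdist_ge0 S T); case: (setdist x S T) => [r | |] //=.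
rewrite !lee_fin => r0 r_le; rewrite mxE; apply: K_noninc; first by rewrite divr_ge0 // ltW.
by rewrite ler_pM2r ?invr_gt0.
Qed.

Lemma connected_at_connect [C : {set 'I_n}] [delta : R] [i j : 'I_n] :
  connected_at x C delta -> i \in C -> j \in C ->
  connect [rel a b | enorm (x a - x b) <= delta] j i.
Proof.
move=> C_conn iC jC; apply/negPn/negP => not_ji.
set near := [rel a b | enorm (x a - x b) <= delta].
pose S1 := [set a in C | connect near j a]; pose S2 := [set a in C | ~~ connect near j a].
apply: (C_conn S1 S2).
- by apply/setP => a; rewrite !inE; case: (a \in C); case: connect.
- by apply/setP => a; rewrite !inE; case: (a \in C); case: connect.
- by apply/set0Pn; exists j; rewrite inE jC connect0.
- by apply/set0Pn; exists i; rewrite inE iC not_ji.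
apply: (big_ind (fun u => delta%:E < u)%E) => [|u w du dw|a]; rewrite ?lt_min ?du ?dw ?ltry //.
rewrite inE => /andP[aC ja].
apply: (big_ind (fun u => delta%:E < u)%E) => [|u w du dw|b]; rewrite ?lt_min ?du ?dw ?ltry //.
rewrite inE lte_fin ltNge => /andP[bC /negP jb]; apply/negP => ab_near.
exact/jb/(connect_trans ja)/connect1.
Qed.

Variables (k : nat) (c : 'I_n -> 'I_k).
Hypothesis c_surj : forall l, exists i, c i = l.
Let M := \big[Num.max/0]_(m < k) Ksig K sigma (setdist x [set t | c t == m] [set t | c t != m]).

Lemma cut_max_ge0 : 0 <= M.
Proof. exact: bigmax_ge_id. Qed.

Lemma affinity_cross_le a b : c a != c b -> A a b <= M.
Proof.
move=> cab; apply: le_trans (le_bigmax _ _ (c a)).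
by apply: affinity_le_setdist; rewrite inE // eq_sym.
Qed.

Variables (U : 'M[R]_n) (lam : 'rV[R]_n).
Hypotheses (U_orth : U^T *m U = 1%:M) (LU : laplacian K sigma x *m U = U *m diag_mx lam)
  (lam_sorted : forall a b : 'I_n, (a <= b)%N -> lam 0 a <= lam 0 b).

Lemma laplacian_eigenvalue_le (r : 'I_n) : (r < k)%N -> lam 0 r <= 2 * n%:R * M.
Proof.
move=> r_lt; have k_gt0 : (0 < k)%N by apply: leq_ltn_trans r_lt.
have [y [y0 y_const yU0]] := cluster_vector_orthogonal c U k_gt0 c_surj.
have yyE : (y *m y^T) 0 0 = \sum_a y 0 a ^+ 2.
  by rewrite mxE; apply: eq_bigr => a _; rewrite mxE expr2.
have yy_gt0 : 0 < (y *m y^T) 0 0.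
  rewrite yyE lt_def sumr_ge0 ?andbT => [|a _]; last exact: sqr_ge0.
  apply: contra_neq y0 => /psumr_eq0P y2_0; apply/rowP => a; rewrite mxE.
  by apply/eqP; rewrite -sqrf_eq0 y2_0 // => b _; apply: sqr_ge0.
have r_le : (r <= k.-1)%N by rewrite -ltnS prednK.
have lower := rayleigh_le U_orth LU r y lam_sorted
  (fun t t_lt => yU0 t (leq_trans t_lt r_le)).
have upper : 2 * (y *m laplacian K sigma x *m y^T) 0 0 <= 4 * n%:R * M * (y *m y^T) 0 0.
  rewrite laplacian_energy; last exact: affinity_sym.
  rewrite yyE; apply: energy_le; [exact: cut_max_ge0 | exact: affinity_ge0 |].
  move=> a b yab; apply: affinity_cross_le; apply: contra_neq yab; exact: y_const.
rewrite -(ler_pM2r yy_gt0); lra.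
Qed.

Lemma eigenvector_diff_sqr_le (t : 'I_n) (l : 'I_k) (delta : R) (i j : 'I_n) :
  0 <= delta -> connected_at x [set a | c a == l] delta -> c i = l -> c j = l -> (t < k)%N ->
  (U i t - U j t) ^+ 2 <= n%:R ^+ 2 * n%:R * (M / K (delta / sigma)).
Proof.
move=> delta0 l_conn ci cj t_lt.
have Kd_gt0 : 0 < K (delta / sigma) by rewrite K_pos // divr_ge0 // ltW.
have iC : i \in [set a | c a == l] by rewrite inE ci.
have jC : j \in [set a | c a == l] by rewrite inE cj.
have near := connected_at_connect l_conn iC jC.
have energyE : \sum_a \sum_b A a b * (U b t - U a t) ^+ 2 = 2 * lam 0 t.
  rewrite -(eigenbasis_quadE U_orth LU) laplacian_energy; last exact: affinity_sym.
  by apply: eq_bigr => a _; apply: eq_bigr => b _; rewrite !mxE.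
have := connect_sqr_le (fun a b => A a b) (fun a => U a t) (ltW Kd_gt0) affinity_ge0
  (fun a b => affinity_ge delta0) near.
rewrite card_ord energyE mulrC -ler_pdivlMr // => diff_le.
apply: le_trans diff_le _; rewrite [leRHS]mulrA.
apply: ler_wpM2r; first by rewrite invr_ge0 ltW.
have nat_le : n.-1%:R * 4 * n%:R <= n%:R ^+ 2 * n%:R :> R.
  by rewrite ler_wpM2r // mulrC -natrX -[4]/(4%:R) -natrM ler_nat leq_four_pred_sqr.
apply: le_trans _ (ler_wpM2r cut_max_ge0 nat_le).
have lam_le := laplacian_eigenvalue_le t t_lt.
have n1_ge0 : 0 <= n.-1%:R :> R := ler0n _ _.
nra.
Qed.

End Affinity.

Arguments eigenvector_diff_sqr_le {R K sigma} K_pos K_noninc sigma_pos {n d x k c} c_surj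
  {U lam} U_orth LU lam_sorted {t l delta i j}.

Theorem lemma1 (R : realType) (K : R -> R)
  (K_pos : forall t, 0 <= t -> 0 < K t)
  (K_noninc : forall s t, 0 <= s -> s <= t -> K t <= K s)
  (K0 : K 0 = 1)
  (sigma : R) (sigma_pos : 0 < sigma)
  (n d k : nat) (x : 'I_n -> 'rV[R]_d) (x_inj : injective x)
  (c : 'I_n -> 'I_k) (c_surj : forall l : 'I_k, exists i : 'I_n, c i = l)
  (delta : 'I_k -> R) (delta_ge0 : forall l, 0 <= delta l)
  (Hconn : forall l : 'I_k, connected_at x [set i | c i == l] (delta l))
  (U : 'M[R]_n) (HU : sorted_eigenbasis (laplacian K sigma x) U) :
  forall (i j : 'I_n) (l : 'I_k), c i = l -> c j = l ->
    rowdist_first k U i j <=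
    \big[Num.max/0]_(m < k)
      (n%:R * Num.sqrt n%:R * Num.sqrt k%:R *
       Num.sqrt (Ksig K sigma (setdist x [set t | c t == m] [set t | c t != m])
                 / Ksig K sigma (delta l)%:E)).
Proof.
move=> i j l ci cj; have [U_orth [lam [LU lam_sorted]]] := HU.
pose M := \big[Num.max/0]_(m < k) Ksig K sigma (setdist x [set t | c t == m] [set t | c t != m]).
pose Kd := K (delta l / sigma).
have Kd_gt0 : 0 < Kd by rewrite K_pos // divr_ge0 // ltW.
have q_ge0 : 0 <= n%:R ^+ 2 * n%:R * (M / Kd).
  by rewrite !mulr_ge0 ?exprn_ge0 ?ler0n ?invr_ge0 ?(ltW Kd_gt0) ?bigmax_ge_id.
have k_le_n : (k <= n)%N by have := surj_card_le c_surj; rewrite !card_ord.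
have col_le (t : 'I_n) : (t < k)%N -> (U i t - U j t) ^+ 2 <= n%:R ^+ 2 * n%:R * (M / Kd).
  by move=> t_lt; apply: (eigenvector_diff_sqr_le K_pos K_noninc sigma_pos c_surj
    U_orth LU lam_sorted (delta_ge0 l) (Hconn l) ci cj t_lt).
apply: le_trans (rowdist_first_le k_le_n q_ge0 col_le) _.
have -> : Num.sqrt (k%:R * (n%:R ^+ 2 * n%:R * (M / Kd))) =
    n%:R * Num.sqrt n%:R * Num.sqrt k%:R * Num.sqrt (M / Kd).
  rewrite -mulrA mulrCA sqrtrM ?exprn_ge0 // sqrtr_sqr ger0_norm //.
  by rewrite sqrtrM // sqrtrM //; ring.
apply: (bigmax_map_le (fun v => n%:R * Num.sqrt n%:R * Num.sqrt k%:R * Num.sqrt (v / Kd))).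
by rewrite mul0r sqrtr0 mulr0.
Qed.
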